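(* Let $G$ be a group acting properly by isometries on a metric space $X$ and let $H\le G$. Assume: (I) $\omega_H<\infty$; (II) $H$ is divergent; (III) there exist subgroups $K\le G$ and $F\le H\cap K$ such that $F$ is a proper finite subgroup of $K$ and the natural morphism $H\ast_F K\to G$ is injective. Then $\omega_H<\omega_G$.
   Context: Proper means $B_G(x,r)=\{g\in G: d(x,gx)\le r\}$ is finite for all $x\in X$, $r\ge0$. For $o\in X$: $\omega_H=\limsup_{r\to\infty}\frac1r\log|B_G(o,r)\cap H|$ and $\omega_G$ is the same with $H=G$. The Poincaré series is $\mathcal P_H(s)=\sum_{h\in H}e^{-s\,d(o,ho)}$; $H$ is divergent if $\mathcal P_H(s)$ diverges at $s=\omega_H$. *)

From Stdlib Require Import Reals List.
From Coquelicot Require Import Coquelicot.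
Open Scope R_scope.
Import ListNotations.

Record IsGroup (G : Type) (mul : G -> G -> G) (one : G) (inv : G -> G) : Prop := {
  grp_assoc : forall a b c, mul a (mul b c) = mul (mul a b) c;
  grp_mul1g : forall a, mul one a = a;
  grp_mulg1 : forall a, mul a one = a;
  grp_mulVg : forall a, mul (inv a) a = one;
  grp_mulgV : forall a, mul a (inv a) = one }.

Record IsSubgroup (G : Type) (mul : G -> G -> G) (one : G) (inv : G -> G)
    (H : G -> Prop) : Prop := {
  sub_one : H one;
  sub_mul : forall a b, H a -> H b -> H (mul a b);
  sub_inv : forall a, H a -> H (inv a) }.

Definition finite_set {T : Type} (P : T -> Prop) : Prop :=
  exists l : list T, forall x, P x -> In x l.

Definition has_card {T : Type} (P : T -> Prop) (n : nat) : Prop :=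
  exists l : list T, NoDup l /\ (forall x, P x <-> In x l) /\ length l = n.

Record IsMetric (X : Type) (d : X -> X -> R) : Prop := {
  met_ge0 : forall x y, 0 <= d x y;
  met_eq0 : forall x y, d x y = 0 <-> x = y;
  met_sym : forall x y, d x y = d y x;
  met_tri : forall x y z, d x z <= d x y + d y z }.

Record IsIsometricAction (G : Type) (mul : G -> G -> G) (one : G)
    (X : Type) (d : X -> X -> R) (act : G -> X -> X) : Prop := {
  act_one : forall x, act one x = x;
  act_mul : forall g h x, act (mul g h) x = act g (act h x);
  act_isom : forall g x y, d (act g x) (act g y) = d x y }.

Definition ballG (G X : Type) (d : X -> X -> R) (act : G -> X -> X)
    (x : X) (r : R) (g : G) : Prop := d x (act g x) <= r.

Definition ProperAction (G X : Type) (d : X -> X -> R) (act : G -> X -> X) : Prop :=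
  forall x r, 0 <= r -> finite_set (ballG G X d act x r).

(* critical exponent
   omega_H = limsup_{r -> oo} (1/r) log |B_G(o,r) ∩ H|,
   the limsup being inf_M sup_{r >= M} (in the extended reals). *)
Definition growth_tail (G X : Type) (d : X -> X -> R) (act : G -> X -> X)
    (o : X) (H : G -> Prop) (M : R) : Rbar :=
  Lub_Rbar (fun y => exists r n, M <= r /\ 0 < r /\
             has_card (fun g => ballG G X d act o r g /\ H g) n /\
             y = ln (INR n) / r).

Definition crit_exp (G X : Type) (d : X -> X -> R) (act : G -> X -> X)
    (o : X) (H : G -> Prop) : Rbar :=
  Rbar_glb (fun z => exists M : R, z = growth_tail G X d act o H M).

(* The Poincaré series  sum_{h in H} exp(-s d(o, h o))  diverges
   (series of nonnegative terms: its finite partial sums are unbounded). *)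
Definition poincare_diverges (G X : Type) (d : X -> X -> R) (act : G -> X -> X)
    (o : X) (H : G -> Prop) (s : R) : Prop :=
  forall B : R, exists l : list G, NoDup l /\ (forall h, In h l -> H h) /\
    B < fold_right (fun h acc => exp (- s * d o (act h o)) + acc) 0 l.

Definition divergent_subgroup (G X : Type) (d : X -> X -> R) (act : G -> X -> X)
    (o : X) (H : G -> Prop) : Prop :=
  poincare_diverges G X d act o H (real (crit_exp G X d act o H)).

(* ---------- amalgamated free product H *_F K ----------
   H *_F K is presented (as a monoid, hence a group) by words in the letters
   inl h (h in H), inr k (k in K), modulo the congruence generated by the
   multiplication tables of H and K, identification of F in H with F in K,
   and deletion of the identity. *)
Section Amalgam.
Variables (G : Type) (mul : G -> G -> G) (one : G) (H K F : G -> Prop).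

Definition amal_word_ok (w : list (G + G)) : Prop :=
  forall a, In a w -> match a with inl h => H h | inr k => K k end.

Inductive amal_rel : list (G + G) -> list (G + G) -> Prop :=
  | amal_mulH a b : H a -> H b -> amal_rel [inl a; inl b] [inl (mul a b)]
  | amal_mulK a b : K a -> K b -> amal_rel [inr a; inr b] [inr (mul a b)]
  | amal_F f : F f -> amal_rel [inl f] [inr f]
  | amal_oneH : amal_rel [inl one] []
  | amal_oneK : amal_rel [inr one] [].

Inductive amal_eq : list (G + G) -> list (G + G) -> Prop :=
  | amal_ctx u v w w' : amal_rel w w' -> amal_eq (u ++ w ++ v) (u ++ w' ++ v)
  | amal_refl w : amal_eq w w
  | amal_sym w w' : amal_eq w w' -> amal_eq w' w
  | amal_trans w1 w2 w3 : amal_eq w1 w2 -> amal_eq w2 w3 -> amal_eq w1 w3.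

Definition amal_eval (w : list (G + G)) : G :=
  fold_right (fun a acc => mul (match a with inl h => h | inr k => k end) acc) one w.

Definition amalgam_injective : Prop :=
  forall w1 w2, amal_word_ok w1 -> amal_word_ok w2 ->
    amal_eval w1 = amal_eval w2 -> amal_eq w1 w2.
End Amalgam.

(* Divergence of the Poincaré series of H at omega_H survives discarding the
   finite subgroup F and keeping one element in each double coset F h F (such
   a coset has at most |F|^2 elements, of comparable weights); hence a finite
   set L of double coset representatives already has Poincaré sum at omega_H
   as large as we wish.  Fix k in K \ F.  By the normal form theorem for
   H *_F K, proved with van der Waerden's action on reduced forms, the
   products h1 k h2 k ... hn k with hi in L are pairwise distinct in G, and by
   the triangle inequality their weights are at least the products of the
   weights of the syllables hi k.  For some s slightly above omega_H the
   syllables still have total weight q > 1, so the partial sums of the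
   Poincaré series of G at s are at least q^n for every n: it diverges, and
   omega_G >= s > omega_H. *)

From Stdlib Require Import Reals List Lra Lia.
From Stdlib Require Import ClassicalEpsilon FunctionalExtensionality PropExtensionality.
From Coquelicot Require Import Coquelicot.
Import ListNotations.
Open Scope R_scope.

Arguments grp_assoc {G mul one inv}.
Arguments grp_mul1g {G mul one inv}.
Arguments grp_mulg1 {G mul one inv}.
Arguments grp_mulVg {G mul one inv}.
Arguments grp_mulgV {G mul one inv}.
Arguments sub_one {G mul one inv H}.
Arguments sub_mul {G mul one inv H}.
Arguments sub_inv {G mul one inv H}.

Section GroupFacts.
Context {G : Type} {mul : G -> G -> G} {one : G} {inv : G -> G}.
Hypothesis HG : IsGroup G mul one inv.

Lemma mulgI a x y : mul a x = mul a y -> x = y.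
Proof.
  intro E. rewrite <- (grp_mul1g HG x), <- (grp_mul1g HG y), <- (grp_mulVg HG a).
  rewrite <- !(grp_assoc HG), E. reflexivity.
Qed.

Lemma mulgKV y x : mul (mul y (inv x)) x = y.
Proof. rewrite <- (grp_assoc HG), (grp_mulVg HG), (grp_mulg1 HG). reflexivity. Qed.

Lemma mulgK y x : mul (mul y x) (inv x) = y.
Proof. rewrite <- (grp_assoc HG), (grp_mulgV HG), (grp_mulg1 HG). reflexivity. Qed.

Lemma mulKg x y : mul (inv x) (mul x y) = y.
Proof. rewrite (grp_assoc HG), (grp_mulVg HG), (grp_mul1g HG). reflexivity. Qed.

Lemma mulKVg x y : mul x (mul (inv x) y) = y.
Proof. rewrite (grp_assoc HG), (grp_mulgV HG), (grp_mul1g HG). reflexivity. Qed.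

Lemma invgM a b : inv (mul a b) = mul (inv b) (inv a).
Proof.
  apply (mulgI (mul a b)). rewrite (grp_mulgV HG), <- (grp_assoc HG), mulKVg.
  symmetry. apply (grp_mulgV HG).
Qed.

Variable F : G -> Prop.
Hypothesis HF : IsSubgroup G mul one inv F.

Lemma subgroup_notin_mull g y : F g -> ~ F y -> ~ F (mul g y).
Proof.
  intros Fg Ny Fgy. apply Ny. rewrite <- (mulKg g y).
  apply (sub_mul HF); [apply (sub_inv HF)|]; assumption.
Qed.

Lemma subgroup_notin_mulr y g : F g -> ~ F y -> ~ F (mul y g).
Proof.
  intros Fg Ny Fyg. apply Ny. rewrite <- (mulgK y g).
  apply (sub_mul HF); [|apply (sub_inv HF)]; assumption.
Qed.

End GroupFacts.

Section ReducedForms.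
Variables (G : Type) (mul : G -> G -> G) (one : G) (inv : G -> G).
Hypothesis HG : IsGroup G mul one inv.
Variable F : G -> Prop.
Hypothesis HF : IsSubgroup G mul one inv F.

Definition rcoset_repr (y : G) : G :=
  epsilon (inhabits one) (fun z => exists f, F f /\ z = mul f y).

Lemma rcoset_repr_spec y : exists f, F f /\ rcoset_repr y = mul f y.
Proof.
  apply (epsilon_spec (inhabits one) (fun z => exists f, F f /\ z = mul f y)).
  exists y, one. split; [apply (sub_one HF) | symmetry; apply (grp_mul1g HG)].
Qed.

Lemma rcoset_repr_mull g y : F g -> rcoset_repr (mul g y) = rcoset_repr y.
Proof.
  intro Fg. unfold rcoset_repr. f_equal.
  apply functional_extensionality. intro z. apply propositional_extensionality. split.
  - intros [f [Ff ->]]. exists (mul f g).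
    split; [apply (sub_mul HF); assumption | apply (grp_assoc HG)].
  - intros [f [Ff ->]]. exists (mul f (inv g)).
    split; [apply (sub_mul HF); [|apply (sub_inv HF)]; assumption|].
    rewrite <- (grp_assoc HG), (mulKg HG). reflexivity.
Qed.

Lemma rcoset_repr_idem y : rcoset_repr (rcoset_repr y) = rcoset_repr y.
Proof.
  destruct (rcoset_repr_spec y) as [f [Ff E]]. rewrite E at 1.
  apply rcoset_repr_mull; assumption.
Qed.

Lemma rcoset_repr_notin y : ~ F y -> ~ F (rcoset_repr y).
Proof.
  intro Ny. destruct (rcoset_repr_spec y) as [f [Ff ->]].
  apply (subgroup_notin_mull HG F HF); assumption.
Qed.

Lemma mul_inv_rcoset_repr y : F (mul y (inv (rcoset_repr y))).
Proof.
  destruct (rcoset_repr_spec y) as [f [Ff ->]].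
  rewrite (invgM HG), (grp_assoc HG), (grp_mulgV HG), (grp_mul1g HG).
  apply (sub_inv HF); assumption.
Qed.

(* A reduced form [(f, [(b1,t1); ...; (bn,tn)])] stands for [f t1 ... tn] with
   [f] in [F], each [ti] the chosen representative of a right [F]-coset other
   than [F], and alternating sides [bi] ([true] for the first factor, [false]
   for the second).  Letters act on reduced forms by left multiplication, as
   in van der Waerden's proof of the normal form theorem. *)
Definition rform := (G * list (bool * G))%type.

Definition push (b : bool) (y : G) (ts : list (bool * G)) : rform :=
  if excluded_middle_informative (F y) then (y, ts)
  else (mul y (inv (rcoset_repr y)), (b, rcoset_repr y) :: ts).

Definition lact (b : bool) (x : G) (st : rform) : rform :=
  match st with
  | (f, (b', t) :: ts) => if Bool.eqb b b' then push b (mul x (mul f t)) ts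
                          else push b (mul x f) ((b', t) :: ts)
  | (f, []) => push b (mul x f) []
  end.

Definition head_side (b : bool) (ts : list (bool * G)) : Prop :=
  match ts with (b', _) :: _ => b' = b | [] => False end.

Fixpoint alternating (ts : list (bool * G)) : Prop :=
  match ts with
  | [] => True
  | (b, _) :: ts' => ~ head_side b ts' /\ alternating ts'
  end.

Definition is_repr (p : bool * G) : Prop := rcoset_repr (snd p) = snd p /\ ~ F (snd p).

Definition rform_ok (st : rform) : Prop :=
  F (fst st) /\ alternating (snd st) /\ List.Forall is_repr (snd st).

Lemma rform_ok_one : rform_ok (one, []).
Proof. repeat split; [apply (sub_one HF) | constructor]. Qed.

Lemma lact_push_form b st : rform_ok st ->
  exists y ts, alternating ts /\ List.Forall is_repr ts /\ ~ head_side b ts /\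
    forall x, lact b x st = push b (mul x y) ts.
Proof.
  destruct st as [f [|[b' t] ts]]; intros [Ff [Al Rp]]; simpl in *.
  - exists f, []. repeat split; auto.
  - destruct (Bool.bool_dec b b') as [<-|ne].
    + inversion Rp; subst. exists (mul f t), ts. destruct Al as [Nh Al].
      repeat split; auto. intro x. rewrite Bool.eqb_reflx. reflexivity.
    + exists f, ((b', t) :: ts). split; [exact Al|split; [exact Rp|split]].
      * simpl. congruence.
      * intro x. destruct b, b'; simpl; congruence.
Qed.

Lemma lact_push b a y ts : ~ head_side b ts -> lact b a (push b y ts) = push b (mul a y) ts.
Proof.
  intro Nh. unfold push at 1. destruct (excluded_middle_informative (F y)).
  - destruct ts as [|[b' t] ts]; simpl; auto.
    simpl in Nh. destruct b, b'; simpl; congruence.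
  - simpl. rewrite Bool.eqb_reflx, (mulgKV HG). reflexivity.
Qed.

Lemma push_ok b y ts :
  alternating ts -> List.Forall is_repr ts -> ~ head_side b ts -> rform_ok (push b y ts).
Proof.
  intros Al Rp Nh. unfold push. destruct (excluded_middle_informative (F y)) as [Fy|Ny].
  - repeat split; auto.
  - repeat split; simpl; auto.
    + apply mul_inv_rcoset_repr.
    + constructor; auto. split; [apply rcoset_repr_idem | apply rcoset_repr_notin; auto].
Qed.

Lemma lact_ok b x st : rform_ok st -> rform_ok (lact b x st).
Proof.
  intro V. destruct (lact_push_form b st V) as [y [ts [Al [Rp [Nh ->]]]]].
  apply push_ok; assumption.
Qed.

Lemma lact_mul b a c st : rform_ok st -> lact b a (lact b c st) = lact b (mul a c) st.
Proof.
  intro V. destruct (lact_push_form b st V) as [y [ts [Al [Rp [Nh E]]]]].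
  rewrite !E, lact_push, (grp_assoc HG); auto.
Qed.

Lemma lact_one b st : rform_ok st -> lact b one st = st.
Proof.
  destruct st as [f [|[b' t] ts]]; intros [Ff [Al Rp]]; simpl in *;
    rewrite !(grp_mul1g HG).
  - unfold push. destruct (excluded_middle_informative (F f)); tauto.
  - inversion Rp as [|? ? [Rt Nt] _]; subst. simpl in Rt, Nt.
    destruct (Bool.eqb b b') eqn:Eb; unfold push.
    + destruct (excluded_middle_informative (F (mul f t))) as [Fft|_].
      * destruct (subgroup_notin_mull HG F HF f t Ff Nt Fft).
      * rewrite rcoset_repr_mull, Rt, (mulgK HG); auto. apply Bool.eqb_prop in Eb. subst. reflexivity.
    + destruct (excluded_middle_informative (F f)); tauto.
Qed.

Lemma lact_F g st : F g -> rform_ok st -> lact true g st = lact false g st.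
Proof.
  intros Fg [Ff [_ Rp]]. destruct st as [f ts]. simpl in Ff, Rp.
  assert (Fgf : F (mul g f)) by (apply (sub_mul HF); assumption).
  assert (Push_F : forall b ts', push b (mul g f) ts' = (mul g f, ts')).
  { intros b ts'. unfold push. destruct (excluded_middle_informative (F (mul g f))); tauto. }
  assert (Push_t : forall b t ts', is_repr (b, t) ->
            push b (mul g (mul f t)) ts' = (mul g f, (b, t) :: ts')).
  { intros b t ts' [Rt Nt]. simpl in Rt, Nt. unfold push. rewrite (grp_assoc HG).
    destruct (excluded_middle_informative (F (mul (mul g f) t))) as [Fy|_].
    - destruct (subgroup_notin_mull HG F HF _ t Fgf Nt Fy).
    - rewrite rcoset_repr_mull, Rt, (mulgK HG); auto. }
  destruct ts as [|[b' t] ts]; simpl; [rewrite !Push_F; reflexivity|].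
  inversion Rp; subst. destruct b'; simpl; rewrite Push_t, Push_F; auto.
Qed.

Definition act_letter (a : G + G) (st : rform) : rform :=
  match a with inl x => lact true x st | inr x => lact false x st end.

Definition word_act (w : list (G + G)) (st : rform) : rform := fold_right act_letter st w.

Lemma word_act_ok w st : rform_ok st -> rform_ok (word_act w st).
Proof. induction w as [|[x|x] w IH]; simpl; auto; intro V; apply lact_ok; auto. Qed.

Lemma word_act_app u v st : word_act (u ++ v) st = word_act u (word_act v st).
Proof. apply fold_right_app. Qed.

Lemma word_act_amal_eq (H K : G -> Prop) w1 w2 : amal_eq G mul one H K F w1 w2 ->
  forall st, rform_ok st -> word_act w1 st = word_act w2 st.
Proof.
  induction 1 as [u v w w' Rel| | |]; intros st V; auto.
  - rewrite !word_act_app. f_equal. assert (V' := word_act_ok v st V).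
    destruct Rel; simpl; auto using lact_mul, lact_F, lact_one.
  - symmetry; auto.
  - rewrite IHamal_eq1; auto.
Qed.

Section HKWords.
Variable k : G.
Hypothesis knF : ~ F k.

Definition hk_word (hs : list G) : list (G + G) := flat_map (fun h => [inl h; inr k]) hs.

Definition hk_form (hs : list G) : rform := word_act (hk_word hs) (one, []).

Definition same_dcoset (x y : G) : Prop := exists a b, F a /\ F b /\ y = mul a (mul x b).

Lemma lact_hk_head st h : rform_ok st -> ~ head_side false (snd st) -> ~ F h ->
  exists f f' ts, F f /\
    lact true h (lact false k st) = (f', (true, rcoset_repr (mul h f)) :: ts).
Proof.
  destruct st as [f0 ts0]. intros [Ff0 _] Nh Nf. simpl in Ff0, Nh.
  assert (Ek : lact false k (f0, ts0) = push false (mul k f0) ts0).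
  { destruct ts0 as [|[b' t] ts0]; simpl; auto. simpl in Nh. destruct b'; simpl; tauto. }
  rewrite Ek. unfold push at 1.
  destruct (excluded_middle_informative (F (mul k f0))) as [Fkf|_].
  { destruct (subgroup_notin_mulr HG F HF k f0 Ff0 knF Fkf). }
  set (f := mul (mul k f0) (inv (rcoset_repr (mul k f0)))).
  assert (Ff : F f) by apply mul_inv_rcoset_repr.
  exists f. simpl. unfold push.
  destruct (excluded_middle_informative (F (mul h f))) as [Fhf|_].
  { destruct (subgroup_notin_mulr HG F HF h f Ff Nf Fhf). }
  eexists; eexists; split; [exact Ff | reflexivity].
Qed.

Lemma hk_form_ok hs : List.Forall (fun h => ~ F h) hs ->
  rform_ok (hk_form hs) /\ ~ head_side false (snd (hk_form hs)).
Proof.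
  induction hs as [|h hs IH]; intro Hs.
  - split; [apply rform_ok_one | simpl; auto].
  - inversion Hs as [|? ? Nh Hs']; subst. destruct (IH Hs') as [V Nhd].
    change (hk_form (h :: hs)) with (lact true h (lact false k (hk_form hs))). split.
    + apply lact_ok, lact_ok, V.
    + destruct (lact_hk_head _ h V Nhd Nh) as [f [f' [ts [_ ->]]]]. simpl. discriminate.
Qed.

Variables (H K : G -> Prop).
Hypothesis Kk : K k.
Hypothesis Inj : amalgam_injective G mul one H K F.

Definition reduced_in_H (x : G) : Prop := H x /\ ~ F x.

Lemma hk_word_ok hs : List.Forall H hs -> amal_word_ok G H K (hk_word hs).
Proof.
  induction hs as [|h hs IH]; intros Hs a Ia; simpl in Ia; [tauto|].
  inversion Hs; subst. destruct Ia as [<-|[<-|Ia]]; auto. apply IH; auto.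
Qed.

Lemma hk_form_eval hs hs' :
  List.Forall H hs -> List.Forall H hs' ->
  amal_eval G mul one (hk_word hs) = amal_eval G mul one (hk_word hs') ->
  hk_form hs = hk_form hs'.
Proof.
  intros Hs Hs' E. apply (word_act_amal_eq H K).
  - apply Inj; auto using hk_word_ok.
  - apply rform_ok_one.
Qed.

Lemma hk_eval_head_same_dcoset h hs h' hs' :
  List.Forall reduced_in_H (h :: hs) -> List.Forall reduced_in_H (h' :: hs') ->
  amal_eval G mul one (hk_word (h :: hs)) = amal_eval G mul one (hk_word (h' :: hs')) ->
  same_dcoset h h'.
Proof.
  intros Hs Hs' E.
  assert (ToH : forall l, List.Forall reduced_in_H l -> List.Forall H l)
    by (intro l; apply Forall_impl; intros x [Hx _]; exact Hx).
  assert (ToF : forall l, List.Forall reduced_in_H l -> List.Forall (fun x => ~ F x) l)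
    by (intro l; apply Forall_impl; intros x [_ Nx]; exact Nx).
  assert (Eform := hk_form_eval _ _ (ToH _ Hs) (ToH _ Hs') E).
  inversion Hs as [|? ? [_ Nh] Ht]; inversion Hs' as [|? ? [_ Nh'] Ht']; subst.
  destruct (hk_form_ok hs (ToF _ Ht)) as [V Nhd].
  destruct (hk_form_ok hs' (ToF _ Ht')) as [V' Nhd'].
  change (hk_form (?x :: ?l)) with (lact true x (lact false k (hk_form l))) in Eform.
  destruct (lact_hk_head _ h V Nhd Nh) as [f [g [ts [Ff E1]]]].
  destruct (lact_hk_head _ h' V' Nhd' Nh') as [f' [g' [ts' [Ff' E2]]]].
  rewrite E1, E2 in Eform. injection Eform as _ Erepr _.
  destruct (rcoset_repr_spec (mul h f)) as [a [Fa Ea]].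
  destruct (rcoset_repr_spec (mul h' f')) as [b [Fb Eb]].
  rewrite Ea, Eb in Erepr.
  exists (mul (inv b) a), (mul f (inv f')). split; [|split].
  - apply (sub_mul HF); [apply (sub_inv HF)|]; assumption.
  - apply (sub_mul HF); [|apply (sub_inv HF)]; assumption.
  - rewrite <- (mulgK HG h' f'), <- (mulKg HG b (mul h' f')), <- Erepr.
    rewrite !(grp_assoc HG). reflexivity.
Qed.

Lemma hk_word_inj (Reps : G -> Prop) :
  (forall x, Reps x -> reduced_in_H x) ->
  (forall x y, Reps x -> Reps y -> same_dcoset x y -> x = y) ->
  forall hs hs', length hs = length hs' ->
  List.Forall Reps hs -> List.Forall Reps hs' ->
  amal_eval G mul one (hk_word hs) = amal_eval G mul one (hk_word hs') -> hs = hs'.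
Proof.
  intros Reps_red Reps_dcoset. induction hs as [|h hs IH]; intros [|h' hs'] Len Hs Hs' E;
    simpl in Len; try discriminate; auto.
  assert (Red : forall l, List.Forall Reps l -> List.Forall reduced_in_H l)
    by (intro l; apply Forall_impl; exact Reps_red).
  inversion Hs; inversion Hs'; subst.
  assert (h = h') as <-.
  { apply Reps_dcoset; auto. apply (hk_eval_head_same_dcoset h hs h' hs'); auto. }
  f_equal. apply IH; auto. apply (mulgI HG k), (mulgI HG h). exact E.
Qed.

End HKWords.
End ReducedForms.

Definition lsum {T : Type} (w : T -> R) (l : list T) : R :=
  fold_right (fun x acc => w x + acc) 0 l.

Definition lprod {T : Type} (u : T -> R) (l : list T) : R :=
  fold_right (fun x acc => u x * acc) 1 l.

Section ListSums.
Context {T : Type}.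
Implicit Types (w : T -> R) (l : list T).

Lemma lsum_app w l1 l2 : lsum w (l1 ++ l2) = lsum w l1 + lsum w l2.
Proof. induction l1 as [|x l1 IH]; simpl; [|rewrite IH]; lra. Qed.

Lemma lsum_partition w (p : T -> bool) l :
  lsum w l = lsum w (filter p l) + lsum w (filter (fun x => negb (p x)) l).
Proof. induction l as [|x l IH]; simpl; [|destruct (p x); simpl; rewrite IH]; lra. Qed.

Lemma lsum_le w w' l : (forall x, In x l -> w x <= w' x) -> lsum w l <= lsum w' l.
Proof.
  induction l as [|x l IH]; intro Hle; simpl; [lra|].
  assert (w x <= w' x) by (apply Hle; left; reflexivity).
  assert (lsum w l <= lsum w' l) by (apply IH; intros; apply Hle; right; assumption).
  lra.
Qed.

Lemma lsum_le_const w c l : (forall x, In x l -> w x <= c) -> lsum w l <= INR (length l) * c.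
Proof.
  intro Hle. replace (INR (length l) * c) with (lsum (fun _ => c) l).
  - apply lsum_le, Hle.
  - induction l as [|x l IH]; simpl; [lra|]. rewrite IH by (intros; apply Hle; right; auto).
    destruct l; simpl; lra.
Qed.

Lemma lsum_scal c w l : lsum (fun x => c * w x) l = c * lsum w l.
Proof. induction l as [|x l IH]; simpl; [|rewrite IH]; lra. Qed.

Lemma lsum_ext w w' l : (forall x, w x = w' x) -> lsum w l = lsum w' l.
Proof. intro E. induction l as [|x l IH]; simpl; [|rewrite IH, E]; reflexivity. Qed.

End ListSums.

Lemma lsum_map {A B : Type} (w : B -> R) (f : A -> B) l :
  lsum w (map f l) = lsum (fun a => w (f a)) l.
Proof. induction l as [|a l IH]; simpl; [|rewrite IH]; reflexivity. Qed.

Lemma lsum_flat_map {A B : Type} (w : B -> R) (f : A -> list B) l :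
  lsum w (flat_map f l) = lsum (fun a => lsum w (f a)) l.
Proof. induction l as [|a l IH]; simpl; [|rewrite lsum_app, IH]; reflexivity. Qed.

Lemma NoDup_flat_map {A B : Type} (f : A -> list B) l :
  NoDup l -> (forall a, In a l -> NoDup (f a)) ->
  (forall a a' x, In x (f a) -> In x (f a') -> a = a') -> NoDup (flat_map f l).
Proof.
  intros ND Hf Hdisj. induction ND as [|a l Na ND IH]; simpl; [constructor|].
  apply NoDup_app.
  - apply Hf; left; reflexivity.
  - apply IH. intros; apply Hf; right; assumption.
  - intros x Ix Ix'. apply in_flat_map in Ix' as [a' [Ia' Ix']].
    rewrite (Hdisj a a' x Ix Ix') in Na. contradiction.
Qed.

Lemma list_bounded {T : Type} (f : T -> R) (l : list T) :
  exists D, 0 <= D /\ forall x, In x l -> f x <= D.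
Proof.
  induction l as [|a l [D [D0 HD]]].
  - exists 0. split; [lra | intros _ []].
  - exists (Rmax D (f a)). split; [eapply Rle_trans; [exact D0 | apply Rmax_l]|].
    intros x [<-|Ix]; [apply Rmax_r | eapply Rle_trans; [apply HD, Ix | apply Rmax_l]].
Qed.

Lemma finite_set_card {T : Type} (P : T -> Prop) : finite_set P -> exists n, has_card P n.
Proof.
  intros [l Hl].
  assert (dec : forall x y : T, {x = y} + {x <> y}) by (intros; apply excluded_middle_informative).
  set (p := fun x => if excluded_middle_informative (P x) then true else false).
  exists (length (nodup dec (filter p l))), (nodup dec (filter p l)).
  split; [apply NoDup_nodup | split; [|reflexivity]].
  intro x. rewrite nodup_In, filter_In. unfold p.
  destruct (excluded_middle_informative (P x)) as [Px|Nx]; split.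
  - intros _. split; [apply Hl, Px | reflexivity].
  - intros _. exact Px.
  - intro Px. contradiction.
  - intros [_ E]. discriminate.
Qed.

Lemma exp_le x y : x <= y -> exp x <= exp y.
Proof. intros [Hlt| ->]; [left; apply exp_increasing, Hlt | right; reflexivity]. Qed.

Lemma exp_pow x n : exp x ^ n = exp (INR n * x).
Proof.
  induction n as [|n IH]; [simpl; rewrite Rmult_0_l, exp_0; reflexivity|].
  rewrite S_INR. simpl pow. rewrite IH, <- exp_plus. f_equal. ring.
Qed.

Section Transversal.
Context {T : Type}.
Variables (Rl : T -> T -> Prop) (w : T -> R) (m : nat) (C : R).
Hypothesis Rl_refl : forall x, Rl x x.
Hypothesis Rl_sym : forall x y, Rl x y -> Rl y x.
Hypothesis class_size : forall x A, NoDup A -> (forall y, In y A -> Rl x y) -> (length A <= m)%nat.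
Hypothesis w_related : forall x y, Rl x y -> w y <= C * w x.
Hypothesis w_ge0 : forall x, 0 <= w x.

Lemma lsum_related_le x A : NoDup (x :: A) -> (forall y, In y A -> Rl x y) ->
  lsum w (x :: A) <= INR m * C * w x.
Proof.
  intros ND HA.
  assert (Hxy : forall y, In y (x :: A) -> Rl x y) by (intros y [<-|Iy]; auto).
  eapply Rle_trans; [apply lsum_le_const with (c := C * w x); intros y Iy; apply w_related, Hxy, Iy|].
  rewrite Rmult_assoc. apply Rmult_le_compat_r.
  - pose proof (w_related x x (Rl_refl x)). pose proof (w_ge0 x). lra.
  - apply le_INR, (class_size x); assumption.
Qed.

(* Greedy choice: keep the first element, discard everything related to it. *)
Lemma transversal_sublist l : NoDup l -> exists L, NoDup L /\ incl L l /\
  (forall x y, In x L -> In y L -> Rl x y -> x = y) /\ lsum w l <= INR m * C * lsum w L.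
Proof.
  remember (length l) as n eqn:En. assert (Hn : (length l <= n)%nat) by lia. clear En.
  revert l Hn. induction n as [|n IH]; intros [|x l] Hn ND; simpl in Hn; try lia;
    try (exists []; repeat split; [constructor | intros ? [] | intros ? ? [] | simpl; lra]).
  inversion ND as [|? ? Nx NDl]; subst.
  set (p := fun y => if excluded_middle_informative (Rl x y) then true else false).
  assert (Hp : forall y, p y = true <-> Rl x y)
    by (intro y; unfold p; destruct (excluded_middle_informative (Rl x y)); split; auto; discriminate).
  destruct (IH (filter (fun y => negb (p y)) l)) as [L [NDL [IL [PL SL]]]].
  { pose proof (filter_length_le (fun y => negb (p y)) l). lia. }
  { apply NoDup_filter, NDl. }
  assert (Unrel : forall y, In y L -> ~ Rl x y).
  { intros y Iy Rxy. apply IL, filter_In in Iy as [_ Py]. apply Hp in Rxy. rewrite Rxy in Py. discriminate. }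
  exists (x :: L). split; [|split; [|split]].
  - constructor; [intro Ix; apply (Unrel x Ix), Rl_refl | exact NDL].
  - intros y [<-|Iy]; [left; reflexivity | right; apply IL, filter_In in Iy as [Iy _]; exact Iy].
  - intros a b [<-|Ia] [<-|Ib] Rab; auto.
    + destruct (Unrel b Ib Rab).
    + destruct (Unrel a Ia (Rl_sym _ _ Rab)).
  - assert (Near : lsum w (x :: filter p l) <= INR m * C * w x).
    { apply lsum_related_le.
      - constructor; [rewrite filter_In; tauto | apply NoDup_filter, NDl].
      - intros y Iy. apply filter_In in Iy as [_ Py]. apply Hp, Py. }
    change (lsum w (x :: l)) with (w x + lsum w l). change (lsum w (x :: L)) with (w x + lsum w L).
    rewrite (lsum_partition w p l). simpl in Near. lra.
Qed.

End Transversal.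

Fixpoint words {T : Type} (L : list T) (n : nat) : list (list T) :=
  match n with
  | O => [[]]
  | S n => flat_map (fun h => map (cons h) (words L n)) L
  end.

Lemma lsum_lprod_words {T : Type} (u : T -> R) L n : lsum (lprod u) (words L n) = lsum u L ^ n.
Proof.
  induction n as [|n IH]; simpl; [lra|].
  rewrite lsum_flat_map, <- IH, Rmult_comm, <- lsum_scal.
  apply lsum_ext. intro h. rewrite lsum_map, Rmult_comm, <- lsum_scal. reflexivity.
Qed.

Lemma In_words {T : Type} (L : list T) n hs :
  In hs (words L n) -> length hs = n /\ List.Forall (fun x => In x L) hs.
Proof.
  revert hs. induction n as [|n IH]; intros hs Ihs; simpl in Ihs.
  - destruct Ihs as [<-|[]]. split; [reflexivity | constructor].
  - apply in_flat_map in Ihs as [h [Ih Ihs]]. apply in_map_iff in Ihs as [hs' [<- Ihs']].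
    destruct (IH hs' Ihs'). split; [simpl; congruence | constructor; assumption].
Qed.

Lemma NoDup_words {T : Type} (L : list T) n : NoDup L -> NoDup (words L n).
Proof.
  intro ND. induction n as [|n IH]; simpl.
  - constructor; [intros [] | constructor].
  - apply NoDup_flat_map; [exact ND| |].
    + intros a _. apply NoDup_map_NoDup_ForallPairs; [|exact IH].
      intros x y _ _ E. injection E. auto.
    + intros a a' x Ia Ia'. apply in_map_iff in Ia as [r [<- _]], Ia' as [r' [E _]].
      injection E. auto.
Qed.

Section ExponentialCounting.
Context {T : Type}.
Variables (P : T -> Prop) (D : T -> R) (t s R0 : R).
Hypothesis D_ge0 : forall x, 0 <= D x.
Hypothesis s_ge0 : 0 <= s.
Hypothesis t_lt_s : t < s.
Hypothesis R0_ge0 : 0 <= R0.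
Hypothesis count_le : forall r l, R0 <= r -> NoDup l ->
  (forall x, In x l -> P x /\ D x <= r) -> INR (length l) <= exp (t * r).

Let rho := exp (t - s).

Lemma rho_bounds : 0 < rho < 1.
Proof. split; [apply exp_pos | rewrite <- exp_0; apply exp_increasing; lra]. Qed.

(* The shell [R0 + N - 1 < D <= R0 + N] has at most [exp (t (R0 + N))] points,
   each of weight at most [exp (- s (R0 + N - 1))]: together at most [exp s * rho ^ N]. *)
Lemma lsum_exp_shells N l : NoDup l -> (forall x, In x l -> P x /\ D x <= R0 + INR N) ->
  lsum (fun x => exp (- s * D x)) l <= exp (t * R0) + exp s * (rho - rho ^ S N) / (1 - rho).
Proof.
  pose proof rho_bounds as Hrho. revert l.
  induction N as [|N IH]; intros l ND Hl.
  - simpl pow. rewrite Rmult_1_r, Rminus_diag, Rmult_0_r, Rdiv_0_l, Rplus_0_r.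
    eapply Rle_trans; [apply lsum_le_const with (c := 1)|].
    + intros x _. rewrite <- exp_0. apply exp_le. pose proof (D_ge0 x). nra.
    + rewrite Rmult_1_r. apply count_le; [lra | exact ND |].
      intros x Ix. rewrite Rplus_0_r in Hl. apply Hl, Ix.
  - set (p := fun x => if Rle_dec (D x) (R0 + INR N) then true else false).
    rewrite (lsum_partition _ p).
    assert (Inner : lsum (fun x => exp (- s * D x)) (filter p l)
                    <= exp (t * R0) + exp s * (rho - rho ^ S N) / (1 - rho)).
    { apply IH; [apply NoDup_filter, ND|]. intros x Ix. apply filter_In in Ix as [Ix Px].
      unfold p in Px. destruct (Rle_dec (D x) (R0 + INR N)); [|discriminate].
      split; [apply Hl, Ix | assumption]. }
    assert (Outer : lsum (fun x => exp (- s * D x)) (filter (fun x => negb (p x)) l)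
                    <= exp (t * (R0 + INR (S N))) * exp (- s * (R0 + INR N))).
    { eapply Rle_trans; [apply lsum_le_const with (c := exp (- s * (R0 + INR N)))|].
      - intros x Ix. apply filter_In in Ix as [_ Px]. unfold p in Px.
        destruct (Rle_dec (D x) (R0 + INR N)) as [|Hgt]; [discriminate|].
        apply exp_le. apply Rnot_le_lt in Hgt. nra.
      - apply Rmult_le_compat_r; [left; apply exp_pos|].
        apply count_le; [rewrite S_INR; pose proof (pos_INR N); lra | apply NoDup_filter, ND|].
        intros x Ix. apply filter_In in Ix as [Ix _]. apply Hl, Ix. }
    assert (Shell : exp (t * (R0 + INR (S N))) * exp (- s * (R0 + INR N)) <= exp s * rho ^ S N).
    { unfold rho. rewrite exp_pow, <- !exp_plus. apply exp_le. rewrite !S_INR. nra. }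
    assert (exp (t * R0) + exp s * (rho - rho ^ S N) / (1 - rho) + exp s * rho ^ S N
            = exp (t * R0) + exp s * (rho - rho ^ S (S N)) / (1 - rho))
      by (simpl pow; field; lra).
    lra.
Qed.

Lemma lsum_exp_bounded : exists B, forall l, NoDup l -> (forall x, In x l -> P x) ->
  lsum (fun x => exp (- s * D x)) l <= B.
Proof.
  pose proof rho_bounds as Hrho.
  exists (exp (t * R0) + exp s * rho / (1 - rho)). intros l ND Hl.
  destruct (list_bounded D l) as [DL [_ HDL]].
  destruct (INR_unbounded DL) as [N HN].
  eapply Rle_trans.
  - apply (lsum_exp_shells N l ND). intros x Ix. split; [apply Hl, Ix|].
    specialize (HDL x Ix). lra.
  - apply Rplus_le_compat_l. unfold Rdiv. apply Rmult_le_compat_r.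
    + left. apply Rinv_0_lt_compat. lra.
    + assert (0 <= rho ^ S N) by (apply pow_le; lra).
      pose proof (exp_pos s). nra.
Qed.

End ExponentialCounting.

Lemma exp_sum_shift {T : Type} (D : T -> R) (L : list T) om c :
  (forall x, 0 <= D x) -> 0 <= c ->
  exp (1 + (om + 1) * c) < lsum (fun x => exp (- om * D x)) L ->
  exists s, om < s /\ 1 < lsum (fun x => exp (- s * D x) * exp (- s * c)) L.
Proof.
  intros D0 c0 Big. destruct (list_bounded D L) as [DL [DL0 HDL]].
  set (eps := / (DL + 1)).
  assert (eps_pos : 0 < eps) by (apply Rinv_0_lt_compat; lra).
  assert (eps_le1 : eps <= 1) by (unfold eps; rewrite <- Rinv_1; apply Rinv_le_contravar; lra).
  assert (eps_DL : eps * (DL + 1) = 1) by (unfold eps; field; lra).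
  exists (om + eps). split; [lra|].
  set (e := exp (- (1 + (om + 1) * c))).
  assert (Term : forall x, In x L -> e * exp (- om * D x) <= exp (- (om + eps) * D x) * exp (- (om + eps) * c)).
  { intros x Ix. unfold e. rewrite <- !exp_plus. apply exp_le.
    specialize (HDL x Ix). specialize (D0 x). nra. }
  apply Rlt_le_trans with (e * lsum (fun x => exp (- om * D x)) L).
  - unfold e. rewrite exp_Ropp. apply (Rmult_lt_reg_l (exp (1 + (om + 1) * c))); [apply exp_pos|].
    field_simplify; [lra | apply Rgt_not_eq, exp_pos].
  - rewrite <- lsum_scal. apply lsum_le, Term.
Qed.

Arguments met_ge0 {X d}.
Arguments met_eq0 {X d}.
Arguments met_sym {X d}.
Arguments met_tri {X d}.
Arguments act_one {G mul one X d act}.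
Arguments act_mul {G mul one X d act}.
Arguments act_isom {G mul one X d act}.

Section PoincareSeries.
Variables (G : Type) (mul : G -> G -> G) (one : G) (inv : G -> G).
Variables (X : Type) (d : X -> X -> R) (act : G -> X -> X) (o : X).
Hypothesis HG : IsGroup G mul one inv.
Hypothesis Hd : IsMetric X d.
Hypothesis Hact : IsIsometricAction G mul one X d act.
Hypothesis Hprop : ProperAction G X d act.

Definition disp (g : G) : R := d o (act g o).

Definition pweight (s : R) (g : G) : R := exp (- s * disp g).

Lemma disp_ge0 g : 0 <= disp g.
Proof. apply (met_ge0 Hd). Qed.

Lemma disp_one : disp one = 0.
Proof. unfold disp. rewrite (act_one Hact). apply (met_eq0 Hd). reflexivity. Qed.

Lemma disp_mul a b : disp (mul a b) <= disp a + disp b.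
Proof.
  unfold disp. rewrite (act_mul Hact).
  rewrite <- (act_isom Hact a o (act b o)). apply (met_tri Hd).
Qed.

Lemma disp_inv a : disp (inv a) = disp a.
Proof.
  unfold disp. rewrite <- (act_isom Hact a), <- (act_mul Hact), (grp_mulgV HG), (act_one Hact).
  apply (met_sym Hd).
Qed.

Lemma pweight_le1 s g : 0 <= s -> pweight s g <= 1.
Proof. intro s0. unfold pweight. rewrite <- exp_0. apply exp_le. pose proof (disp_ge0 g). nra. Qed.

Lemma pweight_mul s a b : 0 <= s -> pweight s a * pweight s b <= pweight s (mul a b).
Proof.
  intro s0. unfold pweight. rewrite <- exp_plus. apply exp_le.
  pose proof (disp_mul a b). nra.
Qed.

Lemma pweight_hk_word s k hs : 0 <= s ->
  lprod (fun h => pweight s h * pweight s k) hs <= pweight s (amal_eval G mul one (hk_word G k hs)).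
Proof.
  intro s0. induction hs as [|h hs IH]; simpl.
  - unfold pweight. rewrite disp_one, Rmult_0_r, exp_0. lra.
  - set (g := amal_eval G mul one (hk_word G k hs)) in *.
    assert (0 <= pweight s h * pweight s k) by (unfold pweight; left; apply Rmult_lt_0_compat; apply exp_pos).
    eapply Rle_trans; [apply Rmult_le_compat_l; [assumption | exact IH]|].
    rewrite Rmult_assoc. eapply Rle_trans; [|apply pweight_mul; assumption].
    apply Rmult_le_compat_l; [unfold pweight; left; apply exp_pos | apply pweight_mul, s0].
Qed.


Lemma growth_tail_count P M (t : R) : Rbar_le (growth_tail G X d act o P M) t ->
  forall r l, Rmax M 1 <= r -> NoDup l -> (forall g, In g l -> P g /\ disp g <= r) ->
  INR (length l) <= exp (t * r).
Proof.
  intros Ht r l Hr ND Hl.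
  assert (r_pos : 0 < r) by (pose proof (Rmax_r M 1); lra).
  destruct (finite_set_card (fun g => ballG G X d act o r g /\ P g)) as [n Hn].
  { destruct (Hprop o r ltac:(lra)) as [lb Hlb]. exists lb. intros g [Hg _]. apply Hlb, Hg. }
  assert (Hln : Rbar_le (ln (INR n) / r) t).
  { eapply Rbar_le_trans; [|exact Ht]. apply (proj1 (Lub_Rbar_correct _)).
    exists r, n. repeat split; auto. pose proof (Rmax_l M 1). lra. }
  simpl in Hln. destruct Hn as [lb [NDb [Eb Lb]]].
  assert (Hlen : (length l <= n)%nat).
  { rewrite <- Lb. apply NoDup_incl_length; [exact ND|]. intros g Ig. apply Eb.
    destruct (Hl g Ig). split; assumption. }
  apply le_INR in Hlen. destruct n as [|n].
  - simpl in Hlen. pose proof (exp_pos (t * r)). lra.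
  - assert (0 < INR (S n)) by (apply lt_0_INR; lia).
    rewrite <- (exp_ln (INR (S n))) in Hlen by assumption.
    eapply Rle_trans; [exact Hlen|]. apply exp_le.
    apply Rle_div_l in Hln; lra.
Qed.

Lemma crit_exp_lt_growth_tail P (s : R) : Rbar_lt (crit_exp G X d act o P) s ->
  exists M t, t < s /\ Rbar_le (growth_tail G X d act o P M) t.
Proof.
  intro Hlt.
  assert (Ex : exists M, Rbar_lt (growth_tail G X d act o P M) s).
  { apply NNPP. intro Nex. apply (Rbar_lt_not_le _ _ Hlt).
    apply (proj2 (proj2_sig (Rbar_ex_glb _))). intros z [M ->].
    apply Rbar_not_lt_le. intro Lt. apply Nex. exists M. exact Lt. }
  destruct Ex as [M HM]. exists M.
  destruct (growth_tail G X d act o P M) as [t| |]; simpl in HM.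
  - exists t. split; [exact HM | apply Rle_refl].
  - contradiction.
  - exists (s - 1). split; [lra | exact I].
Qed.

Lemma crit_exp_ge_of_diverges P (s : R) : 0 <= s -> poincare_diverges G X d act o P s ->
  Rbar_le s (crit_exp G X d act o P).
Proof.
  intros s0 Div. apply Rbar_not_lt_le. intro Hlt.
  destruct (crit_exp_lt_growth_tail P s Hlt) as [M [t [ts Ht]]].
  destruct (lsum_exp_bounded P disp t s (Rmax M 1) disp_ge0 s0 ts) as [B HB].
  - pose proof (Rmax_r M 1). lra.
  - intros r l Hr. apply (growth_tail_count P M t Ht r l Hr).
  - destruct (Div B) as [l [ND [Hl HBl]]].
    specialize (HB l ND Hl). unfold lsum, disp in HB. lra.
Qed.

Lemma crit_exp_ge0 P : P one -> Rbar_le 0 (crit_exp G X d act o P).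
Proof.
  intro P1. apply (proj2 (proj2_sig (Rbar_ex_glb _))). intros z [M ->].
  destruct (finite_set_card (fun g => ballG G X d act o (Rmax M 1) g /\ P g)) as [n Hn].
  { destruct (Hprop o (Rmax M 1) ltac:(pose proof (Rmax_r M 1); lra)) as [lb Hlb].
    exists lb. intros g [Hg _]. apply Hlb, Hg. }
  eapply Rbar_le_trans; [|apply (proj1 (Lub_Rbar_correct _)); exists (Rmax M 1), n].
  2: { repeat split; [apply Rmax_l | pose proof (Rmax_r M 1); lra | exact Hn]. }
  simpl. destruct Hn as [lb [_ [Eb <-]]].
  assert (Ione : In one lb).
  { apply Eb. split; [|exact P1]. unfold ballG. fold (disp one). rewrite disp_one.
    pose proof (Rmax_r M 1). lra. }
  destruct lb as [|g lb]; [destruct Ione|].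
  assert (1 <= INR (length (g :: lb))) by (simpl length; rewrite S_INR; pose proof (pos_INR (length lb)); lra).
  apply Rmult_le_pos.
  - rewrite <- ln_1. apply ln_le; lra.
  - left. apply Rinv_0_lt_compat. pose proof (Rmax_r M 1). lra.
Qed.


Section DoubleCosets.
Variables (F : G -> Prop) (lF : list G).
Hypothesis HF : IsSubgroup G mul one inv F.
Hypothesis lF_spec : forall f, F f -> In f lF.

Lemma same_dcoset_refl x : same_dcoset G mul F x x.
Proof.
  exists one, one. split; [apply (sub_one HF) | split; [apply (sub_one HF)|]].
  rewrite (grp_mulg1 HG), (grp_mul1g HG). reflexivity.
Qed.

Lemma same_dcoset_sym x y : same_dcoset G mul F x y -> same_dcoset G mul F y x.
Proof.
  intros [a [b [Fa [Fb ->]]]]. exists (inv a), (inv b).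
  split; [apply (sub_inv HF), Fa | split; [apply (sub_inv HF), Fb|]].
  rewrite (grp_assoc HG a x b), (mulgK HG), (mulKg HG). reflexivity.
Qed.

Lemma same_dcoset_class_size x A : NoDup A -> (forall y, In y A -> same_dcoset G mul F x y) ->
  (length A <= length lF * length lF)%nat.
Proof.
  intros ND HA.
  rewrite <- (length_prod lF lF), <- (length_map (fun p => mul (fst p) (mul x (snd p)))).
  apply NoDup_incl_length; [exact ND|]. intros y Iy.
  destruct (HA y Iy) as [a [b [Fa [Fb ->]]]].
  apply in_map_iff. exists (a, b). split; [reflexivity | apply in_prod; auto].
Qed.

Lemma pweight_same_dcoset s DF x y : 0 <= s -> (forall f, In f lF -> disp f <= DF) ->
  same_dcoset G mul F x y -> pweight s y <= exp (2 * s * DF) * pweight s x.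
Proof.
  intros s0 HDF [a [b [Fa [Fb ->]]]]. unfold pweight. rewrite <- exp_plus. apply exp_le.
  assert (Ex : x = mul (inv a) (mul (mul a (mul x b)) (inv b)))
    by (rewrite (grp_assoc HG a x b), (mulgK HG), (mulKg HG); reflexivity).
  assert (Dx := disp_mul (inv a) (mul (mul a (mul x b)) (inv b))).
  assert (Dy := disp_mul (mul a (mul x b)) (inv b)).
  rewrite <- Ex in Dx. rewrite !disp_inv in Dx, Dy.
  assert (disp a <= DF) by (apply HDF, lF_spec, Fa).
  assert (disp b <= DF) by (apply HDF, lF_spec, Fb).
  nra.
Qed.

Variable H : G -> Prop.

Lemma dcoset_transversal_large om B : 0 <= om -> poincare_diverges G X d act o H om ->
  exists L, NoDup L /\ (forall x, In x L -> H x /\ ~ F x) /\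
    (forall x y, In x L -> In y L -> same_dcoset G mul F x y -> x = y) /\
    B < lsum (pweight om) L.
Proof.
  intros om0 Div.
  destruct (list_bounded disp lF) as [DF [_ HDF]].
  set (m := (length lF * length lF)%nat).
  set (Cw := exp (2 * om * DF)).
  assert (m_pos : 0 < INR m).
  { apply lt_0_INR. assert (In one lF) by apply lF_spec, (sub_one HF).
    destruct lF; [contradiction | unfold m; simpl; lia]. }
  assert (Cw_pos : 0 < Cw) by apply exp_pos.
  destruct (Div (INR (length lF) + INR m * Cw * B)) as [l [ND [Hl Big]]].
  change (fold_right _ 0 l) with (lsum (pweight om) l) in Big.
  set (pF := fun x => if excluded_middle_informative (F x) then true else false).
  assert (HpF : forall x, pF x = true <-> F x)
    by (intro x; unfold pF; destruct (excluded_middle_informative (F x)); split; auto; discriminate).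
  rewrite (lsum_partition _ pF l) in Big.
  assert (InF : lsum (pweight om) (filter pF l) <= INR (length lF)).
  { eapply Rle_trans; [apply lsum_le_const with (c := 1); intros; apply pweight_le1, om0|].
    rewrite Rmult_1_r. apply le_INR, NoDup_incl_length; [apply NoDup_filter, ND|].
    intros x Ix. apply filter_In in Ix as [_ Px]. apply lF_spec, HpF, Px. }
  destruct (transversal_sublist (same_dcoset G mul F) (pweight om) m Cw same_dcoset_refl
              same_dcoset_sym same_dcoset_class_size
              (fun x y => pweight_same_dcoset om DF x y om0 HDF)
              (fun x => Rlt_le _ _ (exp_pos _))
              (filter (fun x => negb (pF x)) l) (NoDup_filter _ ND))
    as [L [NDL [IL [PL SL]]]].
  exists L. split; [exact NDL | split; [|split; [exact PL|]]].
  - intros x Ix. apply IL, filter_In in Ix as [Ix Px]. split; [apply Hl, Ix|].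
    intro Fx. apply HpF in Fx. rewrite Fx in Px. discriminate.
  - apply (Rmult_lt_reg_l (INR m * Cw)); [apply Rmult_lt_0_compat; assumption | lra].
Qed.

End DoubleCosets.

Lemma poincare_diverges_hk_words (H K F : G -> Prop) (k : G) (L : list G) s :
  IsSubgroup G mul one inv F -> K k -> ~ F k -> amalgam_injective G mul one H K F ->
  NoDup L -> (forall x, In x L -> H x /\ ~ F x) ->
  (forall x y, In x L -> In y L -> same_dcoset G mul F x y -> x = y) -> 0 <= s ->
  1 < lsum (fun h => pweight s h * pweight s k) L ->
  poincare_diverges G X d act o (fun _ => True) s.
Proof.
  intros HF Kk knF Inj NDL HL PL s0 q_gt1 B.
  set (q := lsum (fun h => pweight s h * pweight s k) L) in *.
  destruct (INR_unbounded (B / (q - 1))) as [n Hn].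
  exists (map (fun hs => amal_eval G mul one (hk_word G k hs)) (words L n)).
  split; [|split; [intros; exact I|]].
  - apply NoDup_map_NoDup_ForallPairs; [|apply NoDup_words, NDL].
    intros a b Ia Ib E.
    destruct (In_words L n a Ia) as [La Fa], (In_words L n b Ib) as [Lb Fb].
    apply (hk_word_inj G mul one inv HG F HF k knF H K Kk Inj (fun x => In x L));
      auto; congruence.
  - change (fold_right _ 0 _) with (lsum (pweight s) (map (fun hs => amal_eval G mul one (hk_word G k hs)) (words L n))).
    rewrite lsum_map.
    assert (Words : q ^ n <= lsum (fun hs => pweight s (amal_eval G mul one (hk_word G k hs))) (words L n)).
    { unfold q. rewrite <- lsum_lprod_words. apply lsum_le. intros hs _. apply pweight_hk_word, s0. }
    assert (Bernoulli : 1 + INR n * (q - 1) <= q ^ n).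
    { replace q with (1 + (q - 1)) at 2 by ring. apply Rle_pow_lin. lra. }
    assert (B < INR n * (q - 1)) by (apply Rlt_div_l in Hn; lra).
    lra.
Qed.

End PoincareSeries.

Theorem mainTheorem6
  (G : Type) (mul : G -> G -> G) (one : G) (inv : G -> G)
  (HG : IsGroup G mul one inv)
  (X : Type) (d : X -> X -> R) (Hd : IsMetric X d)
  (act : G -> X -> X) (Hact : IsIsometricAction G mul one X d act)
  (Hprop : ProperAction G X d act)
  (o : X)
  (H : G -> Prop) (HH : IsSubgroup G mul one inv H)
  (HI : Rbar_lt (crit_exp G X d act o H) p_infty)
  (HII : divergent_subgroup G X d act o H)
  (HIII : exists K F : G -> Prop,
      IsSubgroup G mul one inv K /\ IsSubgroup G mul one inv F /\
      (forall f, F f -> H f /\ K f) /\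
      finite_set F /\ (exists k, K k /\ ~ F k) /\
      amalgam_injective G mul one H K F) :
  Rbar_lt (crit_exp G X d act o H) (crit_exp G X d act o (fun _ => True)).
Proof.
  destruct HIII as [K [F [_ [HF [_ [[lF HlF] [[k [Kk knF]] Inj]]]]]]].
  pose proof (crit_exp_ge0 G mul one X d act o Hd Hact Hprop H (sub_one HH)) as om_ge0.
  unfold divergent_subgroup in HII.
  destruct (crit_exp G X d act o H) as [om| |]; simpl in HI, om_ge0, HII |- *; try tauto.
  destruct (dcoset_transversal_large G mul one inv X d act o HG Hd Hact F lF HF HlF H
              om (exp (1 + (om + 1) * disp G X d act o k)) om_ge0 HII)
    as [L [NDL [HL [PL Big]]]].
  destruct (exp_sum_shift (disp G X d act o) L om (disp G X d act o k)
              (disp_ge0 G X d act o Hd) (disp_ge0 G X d act o Hd k) Big)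
    as [s [om_lt_s q_gt1]].
  assert (Div := poincare_diverges_hk_words G mul one inv X d act o HG Hd Hact H K F k L s
                   HF Kk knF Inj NDL HL PL ltac:(lra) q_gt1).
  assert (Ge := crit_exp_ge_of_diverges G X d act o Hd Hprop (fun _ => True) s ltac:(lra) Div).
  destruct (crit_exp G X d act o (fun _ => True)); simpl in Ge |- *; [lra | exact I | exact Ge].
Qed.
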